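(* Let $\sigma\in(0,1]$, let $x_1<\dots<x_N$, $J=[x_1,x_N]$, $T=\{1,\dots,N-1\}$, and let $f,b\in\mathcal{H}^\sigma(J)$ and $\alpha_k\in\mathcal{H}^\sigma(J)$ for all $k\in T$, with $b(x_1)=f(x_1)$, $b(x_N)=f(x_N)$, $b\neq f$ and $\max_{t\in J}|\alpha_k(t)|<1$ for each $k$. Let $c=\min\{a_k:k\in T\}$. If $\|\alpha\|_{\mathcal{H}}/c^\sigma<1$, then the $\alpha$-fractal function $f^\alpha$ is Hölder continuous with exponent $\sigma$.
   Context: $\mathcal{H}^\sigma(J)$ is the space of functions $h:J\to\mathbb{C}$ that are Hölder continuous with exponent $\sigma$, with norm $\|h\|_{\mathcal{H}}=\|h\|_\infty+[h]_\sigma$, $[h]_\sigma=\sup_{t_1\ne t_2}|h(t_1)-h(t_2)|/|t_1-t_2|^\sigma$. For the scaling vector $\alpha=(\alpha_1,\dots,\alpha_{N-1})$: $\|\alpha\|_\infty=\max_{k\in T}\sup_{t\in J}|\alpha_k(t)|$, $[\alpha]_\sigma=\max_{k\in T}\sup_{t_1\ne t_2\in J}|\alpha_k(t_1)-\alpha_k(t_2)|/|t_1-t_2|^\sigma$, $\|\alpha\|_{\mathcal{H}}=\|\alpha\|_\infty+[\alpha]_\sigma$. Construction: $J_k=[x_k,x_{k+1}]$, $P_k(t)=a_kt+d_k$ with $P_k(x_1)=x_k$, $P_k(x_N)=x_{k+1}$ (so $a_k=(x_{k+1}-x_k)/(x_N-x_1)$). The $\alpha$-fractal function $f^\alpha:J\to\mathbb{C}$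 is the unique continuous function whose graph is the attractor of the IFS $\{J\times\mathbb{C};W_k(t,y)=(P_k(t),\alpha_k(t)y+f(P_k(t))-\alpha_k(t)b(t)),\ k\in T\}$; equivalently it is the continuous function satisfying $f^\alpha(t)=f(t)+\alpha_k(P_k^{-1}(t))\,(f^\alpha-b)(P_k^{-1}(t))$ for $t\in J_k$, $k\in T$. *)

From HB Require Import structures.
From mathcomp Require Import all_boot all_order all_algebra.
From mathcomp Require Import all_classical all_reals.
From mathcomp Require Import topology normedtype exp.
From mathcomp Require Import complex.
Set Implicit Arguments. Unset Strict Implicit. Unset Printing Implicit Defensive.
Import Order.TTheory GRing.Theory Num.Theory.
Local Open Scope classical_set_scope.
Local Open Scope ring_scope.

Section FIF.
Variable R : realType.

Definition cmod (z : R[i]) : R := Normc.normc z.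

Definition Jint (x : nat -> R) (N : nat) : set R := [set t | x 1%N <= t <= x N].

Definition Tidx (N : nat) : set nat := [set k | (1 <= k < N)%N].

Definition holder (sigma : R) (J : set R) (h : R -> R[i]) : Prop :=
  exists K : R, forall t1 t2, J t1 -> J t2 ->
    cmod (h t1 - h t2) <= K * (`|t1 - t2| `^ sigma).

Definition acoef (x : nat -> R) (N k : nat) : R :=
  (x k.+1 - x k) / (x N - x 1%N).

(* P_k^{-1}(t), where P_k(t) = a_k t + d_k, P_k(x_1) = x_k *)
Definition Pinv (x : nat -> R) (N k : nat) (t : R) : R :=
  x 1%N + (t - x k) / acoef x N k.

Definition cmin (x : nat -> R) (N : nat) : R :=
  \big[Order.min/acoef x N 1%N]_(1 <= k < N) acoef x N k.

Definition alpha_sup (x : nat -> R) (N : nat) (alpha : nat -> R -> R[i]) : R :=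
  sup [set cmod (alpha k t) | k in Tidx N & t in Jint x N].

Definition alpha_semi (sigma : R) (x : nat -> R) (N : nat)
    (alpha : nat -> R -> R[i]) : R :=
  sup [set r | exists k t1 t2, [/\ Tidx N k, Jint x N t1, Jint x N t2, t1 != t2 &
        r = cmod (alpha k t1 - alpha k t2) / (`|t1 - t2| `^ sigma)]].

Definition alpha_H (sigma : R) x N alpha : R :=
  alpha_sup x N alpha + alpha_semi sigma x N alpha.

Definition cont_on (J : set R) (g : R -> R[i]) : Prop :=
  forall t, J t -> forall e : R, 0 < e -> exists2 d : R, 0 < d &
    forall s, J s -> `|s - t| < d -> cmod (g s - g t) < e.

Definition is_alpha_fractal (x : nat -> R) (N : nat) (f b : R -> R[i])
    (alpha : nat -> R -> R[i]) (g : R -> R[i]) : Prop :=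
  cont_on (Jint x N) g /\
  forall k, Tidx N k -> forall t, x k <= t <= x k.+1 ->
    g t = f t + alpha k (Pinv x N k t) * (g (Pinv x N k t) - b (Pinv x N k t)).

End FIF.

From HB Require Import structures.
From mathcomp Require Import all_boot all_order all_algebra.
From mathcomp Require Import all_classical all_reals.
From mathcomp Require Import topology normedtype exp derive.
From mathcomp Require Import complex.
From mathcomp Require Import ring lra.
Set Implicit Arguments. Unset Strict Implicit. Unset Printing Implicit Defensive.
Import Order.TTheory GRing.Theory Num.Theory numFieldNormedType.Exports.
Local Open Scope classical_set_scope.
Local Open Scope ring_scope.

(* Write rho = ||alpha||_oo / c^sigma < 1.  On a cell J_k the self-referential
   equation expresses g through g o P_k^-1, and P_k^-1 stretches distances by
   the factor 1/a_k <= 1/c.  Hence if s bounds the Hoelder quotients of g on the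
   image under P_k^-1 of a pair in J_k, then A + rho s bounds the quotient of
   the pair itself, where A only depends on f, b, alpha and sup |g|.  As P_k^-1
   never shrinks distances, the supremum s_h of the Hoelder quotients over the
   pairs at distance at least h (finite since g is bounded) satisfies
   s_h <= A + rho s_h, i.e. s_h <= A / (1 - rho) uniformly in h.
   This is first carried out for the pairs (t, x_1) and (t, x_N), because P_1^-1
   fixes x_1 and P_(N-1)^-1 fixes x_N.  For a general pair, either both points
   lie in one cell, or they lie in adjacent cells and the pair is split at the
   common node x_(k+1), which P_k^-1 and P_(k+1)^-1 send to x_N and x_1, or
   they are at distance at least c (x_N - x_1) and sup |g| suffices. *)

Section ComplexModulus.
Variable R : realType.
Implicit Types u v w : R[i].

Lemma cmod_ge0 u : 0 <= cmod u.
Proof. by case: u => a b; rewrite /cmod sqrtr_ge0. Qed.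

Lemma cmodD u v : cmod (u + v) <= cmod u + cmod v.
Proof. exact: le_normcD. Qed.

Lemma cmodM u v : cmod (u * v) = cmod u * cmod v.
Proof. exact: Normc.normcM. Qed.

Lemma cmodN u : cmod (- u) = cmod u.
Proof. exact: normcN. Qed.

Lemma cmod_distC u v : cmod (u - v) = cmod (v - u).
Proof. by rewrite -opprB cmodN. Qed.

Lemma cmod_subrr u : cmod (u - u) = 0.
Proof. by rewrite subrr /cmod Normc.normc0. Qed.

Lemma cmod_le_distD u v : cmod u <= cmod (u - v) + cmod v.
Proof. by have := cmodD (u - v) v; rewrite subrK. Qed.

Lemma cmod_dist_triangle u v w : cmod (u - w) <= cmod (u - v) + cmod (v - w).
Proof. by apply: le_trans (cmodD _ _); rewrite addrA subrK. Qed.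

Lemma cmod_dist_ge u v : cmod u - cmod v <= cmod (u - v).
Proof. by rewrite lerBlDr cmod_le_distD. Qed.

Lemma cmod_lipschitz u v : `|cmod u - cmod v| <= cmod (u - v).
Proof.
by rewrite ler_norml cmod_dist_ge andbT lerNl opprB cmod_distC cmod_dist_ge.
Qed.

Lemma cmod_affine_diff (f1 f2 a1 a2 g1 g2 b1 b2 : R[i]) :
  cmod (f1 + a1 * (g1 - b1) - (f2 + a2 * (g2 - b2))) <=
  cmod (f1 - f2) + cmod a1 * (cmod (g1 - g2) + cmod (b1 - b2))
    + cmod (a1 - a2) * (cmod g2 + cmod b2).
Proof.
have -> : f1 + a1 * (g1 - b1) - (f2 + a2 * (g2 - b2)) =
    (f1 - f2) + (a1 * ((g1 - g2) - (b1 - b2)) + (a1 - a2) * (g2 - b2)) by ring.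
apply: le_trans (cmodD _ _) _; rewrite -[X in _ <= X]addrA lerD2l.
apply: le_trans (cmodD _ _) _; rewrite !cmodM.
by apply: lerD; apply: ler_wpM2l; rewrite ?cmod_ge0 //;
  apply: le_trans (cmodD _ _) _; rewrite cmodN.
Qed.

End ComplexModulus.

Lemma cont_on_bounded (R : realType) (a b : R) (g : R -> R[i]) : a <= b ->
  cont_on [set t | a <= t <= b] g -> exists M, forall t, a <= t <= b -> cmod (g t) <= M.
Proof.
move=> ab gcont.
have : {within `[a, b], continuous (fun t => cmod (g t))}.
  apply/subspace_continuousP => t; rewrite /= in_itv /= => tab.
  apply/cvgrPdist_lt => e e0.
  have [d d0 gd] := gcont t tab e e0.
  rewrite /within; apply/nbhs_ballP; exists d => //= s; rewrite /ball /= => tsd.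
  rewrite in_itv /= => sab; apply: le_lt_trans (cmod_lipschitz _ _) _.
  by rewrite cmod_distC; apply: gd => //; rewrite distrC.
case/(EVT_max ab) => t _ tmax; exists (cmod (g t)) => s sab.
by apply: tmax; rewrite in_itv.
Qed.

Lemma ex_common_bound (R : realType) (P : nat -> R -> Prop) (m n : nat) :
  (forall k K K', P k K -> K <= K' -> P k K') ->
  (forall k, (m <= k < n)%N -> exists K, P k K) ->
  exists2 K, 0 <= K & forall k, (m <= k < n)%N -> P k K.
Proof.
move=> P_mono; elim: n => [|n IH] bounded; first by exists 0 => // k; rewrite ltn0 andbF.
have [K1 K1_ge0 PK1] : exists2 K, 0 <= K & forall k, (m <= k < n)%N -> P k K.
  by apply: IH => k /andP[mk kn]; apply: bounded; rewrite mk ltnS ltnW.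
have [mn|nm] := leqP m n; last first.
  exists K1 => // k /andP[mk]; rewrite ltnS => kn.
  by have := leq_trans mk kn; rewrite leqNgt nm.
have [K2 PK2] := bounded n (andb_true_intro (conj mn (ltnSn n))).
exists (Num.max K1 K2) => [|k /andP[mk]]; first by rewrite le_max K1_ge0.
rewrite ltnS leq_eqVlt => /orP[/eqP->|kn].
  by apply: P_mono PK2 _; rewrite le_max lexx orbT.
by apply: P_mono (PK1 k _) _; rewrite ?mk ?le_max ?lexx.
Qed.

Section HolderBasics.
Variables (R : realType) (sigma : R).

Lemma holder_ge0 (J : set R) (h : R -> R[i]) : holder sigma J h ->
  exists2 K, 0 <= K & forall t1 t2, J t1 -> J t2 ->
    cmod (h t1 - h t2) <= K * `|t1 - t2| `^ sigma.
Proof.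
case=> K hK; exists (Num.max K 0) => [|t1 t2 J1 J2]; first by rewrite le_max lexx orbT.
by apply: le_trans (hK _ _ J1 J2) _; rewrite ler_wpM2r ?powR_ge0 // le_max lexx.
Qed.

Lemma holder_bounded (a b : R) (h : R -> R[i]) : 0 <= sigma -> a <= b ->
  holder sigma [set t | a <= t <= b] h ->
  exists M, forall t, a <= t <= b -> cmod (h t) <= M.
Proof.
move=> sigma_ge0 ab /holder_ge0[K K0 hK].
have aJ : a <= a <= b by rewrite lexx.
exists (cmod (h a) + K * (b - a) `^ sigma) => t tJ.
apply: le_trans (cmod_le_distD _ (h a)) _; rewrite addrC lerD2l.
apply: le_trans (hK _ _ tJ aJ) _; rewrite ler_wpM2l // ge0_ler_powR // ?nnegrE //.
- by rewrite subr_ge0.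
- by case/andP: tJ => a_le_t t_le_b; rewrite ger0_norm ?subr_ge0 ?lerD2r.
Qed.

Lemma holder_ge0_uniform (J : set R) (h : nat -> R -> R[i]) (m n : nat) :
  (forall k, (m <= k < n)%N -> holder sigma J (h k)) ->
  exists2 K, 0 <= K & forall k, (m <= k < n)%N -> forall t1 t2, J t1 -> J t2 ->
    cmod (h k t1 - h k t2) <= K * `|t1 - t2| `^ sigma.
Proof.
move=> h_holder; apply: ex_common_bound => [k K K' hK KK' t1 t2 J1 J2|k /h_holder].
  exact: le_trans (hK t1 t2 J1 J2) (ler_wpM2r (powR_ge0 _ _) KK').
by case/holder_ge0 => K _ hK; exists K.
Qed.

Lemma holder_bounded_uniform (a b : R) (h : nat -> R -> R[i]) (m n : nat) :
  0 <= sigma -> a <= b ->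
  (forall k, (m <= k < n)%N -> holder sigma [set t | a <= t <= b] (h k)) ->
  exists2 M, 0 <= M & forall k, (m <= k < n)%N -> forall t, a <= t <= b -> cmod (h k t) <= M.
Proof.
move=> sigma_ge0 ab h_holder; apply: ex_common_bound => [k M M' hM MM' t tJ|k /h_holder].
  exact: le_trans (hM t tJ) MM'.
exact: holder_bounded.
Qed.

End HolderBasics.

Lemma ratio_bootstrap (R : realType) (T : Type) (P : T -> Prop) (phi w : T -> R)
    (A rho M : R) :
  0 <= rho < 1 -> (forall i, P i -> 0 <= phi i <= M) ->
  (forall h s, 0 < h -> 0 <= s ->
     (forall i, P i -> h <= w i -> phi i <= s * w i) ->
     forall i, P i -> h <= w i -> phi i <= (A + rho * s) * w i) ->
  forall i, P i -> 0 < w i -> phi i <= A / (1 - rho) * w i.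
Proof.
move=> /andP[rho_ge0 rho_lt1] phi_bnd step i0 Pi0 wi0.
(* Restricting to w i >= w i0 keeps the quotients phi / w bounded by M / w i0. *)
pose S := [set phi i / w i | i in [set i | P i /\ w i0 <= w i]].
have S_ub : ubound S (M / w i0).
  move=> _ [i [Pi wi] <-]; have /andP[phi_ge0 phiM] := phi_bnd i Pi.
  have M_ge0 : 0 <= M := le_trans phi_ge0 phiM.
  have wi_gt0 : 0 < w i := lt_le_trans wi0 wi.
  by rewrite ler_pdivrMr // mulrAC ler_pdivlMr // ler_pM // ltW.
have le_sup i : P i -> w i0 <= w i -> phi i / w i <= sup S.
  by move=> Pi wi; apply: ub_le_sup; [exists (M / w i0) | exists i].
have S_ge0 : 0 <= sup S.
  apply: le_trans (le_sup i0 Pi0 (lexx _)).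
  by case/andP: (phi_bnd i0 Pi0) => phi_ge0 _; rewrite divr_ge0 // ltW.
have bound_sup i : P i -> w i0 <= w i -> phi i <= sup S * w i.
  by move=> Pi wi; rewrite -ler_pdivrMr ?(lt_le_trans wi0) ?le_sup.
have sup_le : sup S <= A + rho * sup S.
  apply: ge_sup; first by exists (phi i0 / w i0), i0.
  move=> _ [i [Pi wi] <-]; rewrite ler_pdivrMr ?(lt_le_trans wi0) //.
  exact: step _ _ wi0 S_ge0 bound_sup i Pi wi.
apply: le_trans (bound_sup i0 Pi0 (lexx _)) _; apply: ler_wpM2r; first exact: ltW.
by rewrite ler_pdivlMr ?subr_gt0 //; lra.
Qed.

Section ScalingNorms.
Variables (R : realType) (sigma : R) (x : nat -> R) (N : nat).
Variable alpha : nat -> R -> R[i].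

Lemma alpha_semi_ge0 : 0 <= alpha_semi sigma x N alpha.
Proof.
have [[[r Sr] S_ub]|S_unbounded] := pselect (has_sup [set r | exists k t1 t2,
    [/\ Tidx N k, Jint x N t1, Jint x N t2, t1 != t2 &
        r = cmod (alpha k t1 - alpha k t2) / `|t1 - t2| `^ sigma]]); last first.
  by rewrite /alpha_semi sup_out.
apply: le_trans (ub_le_sup S_ub Sr); case: Sr => k [t1 [t2 [_ _ _ _ ->]]].
by rewrite divr_ge0 ?cmod_ge0 ?powR_ge0.
Qed.

Lemma alpha_sup_le_H : alpha_sup x N alpha <= alpha_H sigma x N alpha.
Proof. by rewrite lerDl alpha_semi_ge0. Qed.

Lemma cmod_le_alpha_sup M :
  (forall k, Tidx N k -> forall t, Jint x N t -> cmod (alpha k t) <= M) ->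
  forall k, Tidx N k -> forall t, Jint x N t -> cmod (alpha k t) <= alpha_sup x N alpha.
Proof.
move=> alpha_le k kT t Jt; apply: ub_le_sup; last by exists k => //; exists t.
by exists M => _ [k' k'T [t' Jt' <-]]; exact: alpha_le.
Qed.

End ScalingNorms.

Section Partition.
Variables (R : realType) (N : nat) (x : nat -> R).
Hypothesis N_ge2 : (2 <= N)%N.
Hypothesis x_incr : forall i, (1 <= i < N)%N -> x i < x i.+1.

Local Notation J := (Jint x N).
Local Notation c := (cmin x N).
Local Notation L := (x N - x 1%N).

Lemma nodes_lt i j : (1 <= i)%N -> (i < j <= N)%N -> x i < x j.
Proof.
move=> i1 /andP[ij jN].
pose D := [pred k : nat | (1 <= k <= N)%N].
have D_convex : {in D &, forall i j k, (i < k < j)%N -> k \in D}.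
  move=> i' j'; rewrite !inE => /andP[i'1 _] /andP[_ j'N] k /andP[ik kj].
  by rewrite inE (leq_trans i'1 (ltnW ik)) (leq_trans (ltnW kj) j'N).
have x_step : {in D, forall k, k.+1 \in D -> x k < x k.+1}.
  by move=> k; rewrite !inE => /andP[k1 _] /andP[_ kN]; apply: x_incr; rewrite k1.
have iD : i \in D by rewrite inE i1 (leq_trans (ltnW ij) jN).
have jD : j \in D by rewrite inE jN (leq_trans i1 (ltnW ij)).
exact: (Order.NatMonotonyTheory.homo_ltn_lt_in D_convex x_step _ _ iD jD ij).
Qed.

Lemma nodes_le i j : (1 <= i)%N -> (i <= j <= N)%N -> x i <= x j.
Proof.
move=> i1 /andP[]; rewrite leq_eqVlt => /orP[/eqP-> //|ij jN].
by apply/ltW/nodes_lt; rewrite ?ij.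
Qed.

Lemma endpoints_lt : x 1%N < x N.
Proof. by apply: nodes_lt; rewrite ?N_ge2 ?leqnn. Qed.

Lemma acoef_gt0 k : Tidx N k -> 0 < acoef x N k.
Proof.
by case/andP=> k1 kN; apply: divr_gt0; rewrite subr_gt0 ?endpoints_lt // x_incr ?k1.
Qed.

Lemma acoefML k : acoef x N k * L = x k.+1 - x k.
Proof. by rewrite /acoef divfK // subr_eq0 gt_eqF ?endpoints_lt. Qed.

Lemma acoef_le1 k : Tidx N k -> acoef x N k <= 1.
Proof.
case/andP=> k1 kN; rewrite -(ler_pM2r (x := L)) ?subr_gt0 ?endpoints_lt //.
by rewrite acoefML mul1r; apply: lerB; apply: nodes_le; rewrite ?kN ?k1 ?leqnn ?(ltnW kN).
Qed.

Lemma cmin_le_acoef k : Tidx N k -> c <= acoef x N k.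
Proof. by case/andP=> k1 kN; apply: ge_bigmin_seq; rewrite // mem_index_iota k1. Qed.

Lemma cmin_gt0 : 0 < c.
Proof.
rewrite /cmin big_seq; apply: (big_ind (fun v => 0 < v)).
- exact: (@acoef_gt0 1%N).
- by move=> u v u0 v0; rewrite lt_min u0 v0.
- by move=> k; rewrite mem_index_iota; exact: acoef_gt0.
Qed.

Lemma cell_length_ge k : Tidx N k -> c * L <= x k.+1 - x k.
Proof.
by move=> kT; rewrite -acoefML ler_pM2r ?subr_gt0 ?endpoints_lt ?cmin_le_acoef.
Qed.

Lemma cell_sub k t : Tidx N k -> x k <= t <= x k.+1 -> J t.
Proof.
case/andP=> k1 kN /andP[xkt txk]; apply/andP; split.
  by apply: le_trans xkt; apply: nodes_le; rewrite // k1 ltnW.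
by apply: le_trans txk _; apply: nodes_le; rewrite ?kN ?leqnn.
Qed.

Lemma cell_cover t : J t -> exists2 k, Tidx N k & x k <= t <= x k.+1.
Proof.
case/andP=> x1t tN.
have cover n : (0 < n < N)%N -> t <= x n.+1 ->
    exists2 k, (0 < k <= n)%N & x k <= t <= x k.+1.
  elim: n => [|n IH] // /andP[_ nN] txn.
  have [n0|n_gt0] := posnP n; first by rewrite n0 in txn *; exists 1%N; rewrite ?x1t.
  have [txn'|xnt] := leP t (x n.+1).
  - have [|k /andP[k1 kn] tk] := IH _ txn'; first by rewrite n_gt0 (ltnW nN).
    by exists k; rewrite ?k1 ?(leqW kn).
  - by exists n.+1; rewrite ?leqnn ?(ltW xnt).
have N1 : N.-1.+1 = N by rewrite prednK // ltnW.
rewrite -N1 in tN.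
have [|k /andP[k1 kN] tk] := cover N.-1 _ tN; first by rewrite -ltnS N1 N_ge2 ?leqnn.
by exists k => //; rewrite /Tidx /= k1 -N1 ltnS.
Qed.

Lemma Pinv_node_l k : Pinv x N k (x k) = x 1%N.
Proof. by rewrite /Pinv subrr mul0r addr0. Qed.

Lemma Pinv_node_r k : Tidx N k -> Pinv x N k (x k.+1) = x N.
Proof.
move=> kT; rewrite /Pinv -acoefML mulrAC divff ?mul1r ?gt_eqF ?acoef_gt0 //.
by rewrite addrC subrK.
Qed.

Lemma Pinv_cell k t : Tidx N k -> x k <= t <= x k.+1 -> J (Pinv x N k t).
Proof.
move=> kT /andP[xkt txk]; have a_gt0 := acoef_gt0 kT.
have off_ge0 : 0 <= (t - x k) / acoef x N k.
  by apply: divr_ge0; rewrite ?subr_ge0 // ltW.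
have off_le : (t - x k) / acoef x N k <= L.
  by rewrite ler_pdivrMr // mulrC acoefML lerD2r.
by apply/andP; split; rewrite /Pinv; lra.
Qed.

Lemma Pinv_distE k t1 t2 : Tidx N k ->
  `|Pinv x N k t1 - Pinv x N k t2| = `|t1 - t2| / acoef x N k.
Proof.
move=> kT; have -> : Pinv x N k t1 - Pinv x N k t2 = (t1 - t2) / acoef x N k.
  by rewrite /Pinv; ring.
by rewrite normrM normfV (gtr0_norm (acoef_gt0 kT)).
Qed.

Lemma dist_le_Pinv k t1 t2 : Tidx N k ->
  `|t1 - t2| <= `|Pinv x N k t1 - Pinv x N k t2|.
Proof.
move=> kT; rewrite Pinv_distE // ler_pdivlMr ?acoef_gt0 //.
by rewrite ler_piMr ?acoef_le1.
Qed.

Lemma Pinv_dist_powR (sigma : R) k t1 t2 : 0 <= sigma -> Tidx N k ->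
  `|Pinv x N k t1 - Pinv x N k t2| `^ sigma <= `|t1 - t2| `^ sigma / c `^ sigma.
Proof.
move=> sigma_ge0 kT; have a_gt0 := acoef_gt0 kT.
rewrite ler_pdivlMr ?powR_gt0 ?cmin_gt0 //.
apply: le_trans (_ : _ <= `|Pinv x N k t1 - Pinv x N k t2| `^ sigma * acoef x N k `^ sigma) _.
  apply: ler_wpM2l; first exact: powR_ge0.
  by apply: ge0_ler_powR; rewrite ?nnegrE ?cmin_le_acoef // ltW ?cmin_gt0.
rewrite -powRM ?Pinv_distE ?divfK ?gt_eqF //; last exact: ltW.
by rewrite divr_ge0 // ltW.
Qed.

Lemma endpoint_cases s e : J s -> e = x 1%N \/ e = x N ->
  c * L <= `|s - e| \/
  exists2 k, Tidx N k & [/\ x k <= s <= x k.+1, x k <= e <= x k.+1 & Pinv x N k e = e].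
Proof.
case/andP=> x1s sN [->|->].
  have T1 : Tidx N 1 := N_ge2.
  have x12 := x_incr T1.
  have [sx2|x2s] := leP s (x 2); [right; exists 1%N => // | left].
    by rewrite x1s sx2 lexx ltW // Pinv_node_l.
  apply: le_trans (cell_length_ge T1) _.
  by rewrite ger0_norm ?subr_ge0 // lerD2r ltW.
have N1 : N.-1.+1 = N by rewrite prednK // ltnW.
have Tm : Tidx N N.-1 by rewrite /Tidx /= -ltnS N1 N_ge2 ?leqnn.
have xmN : x N.-1 < x N by rewrite -{2}N1; exact: x_incr.
have [xms|sxm] := leP (x N.-1) s; [right; exists N.-1 => // | left].
  by rewrite N1 xms sN lexx ltW // -{3}N1 Pinv_node_r.
apply: le_trans (cell_length_ge Tm) _.
by rewrite distrC ger0_norm ?subr_ge0 // N1 lerD2l lerN2 ltW.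
Qed.

Lemma pair_cases s t : J s -> J t -> s <= t ->
  [\/ c * L <= t - s,
      exists2 k, Tidx N k & x k <= s <= x k.+1 /\ x k <= t <= x k.+1 |
      exists2 k, Tidx N k /\ Tidx N k.+1 & x k <= s <= x k.+1 /\ x k.+1 <= t <= x k.+2].
Proof.
move=> Js /andP[_ tN] st; have [k kT /andP[xks sxk]] := cell_cover Js.
have [txk|xkt] := leP t (x k.+1).
  by apply: Or32; exists k; rewrite ?xks ?sxk ?txk ?(le_trans xks st).
have Tk1 : Tidx N k.+1.
  case/andP: kT => _ kN; rewrite /Tidx /= ltn_neqAle kN andbT.
  by apply: contraTneq xkt => ->; rewrite -leNgt.
have [txk2|xk2t] := leP t (x k.+2).
  by apply: Or33; exists k; rewrite ?xks ?sxk ?txk2 ?(ltW xkt).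
apply: Or31; apply: le_trans (cell_length_ge Tk1) _.
by rewrite lerB // ltW.
Qed.

End Partition.

Section FractalHolder.
Variables (R : realType) (sigma : R) (N : nat) (x : nat -> R).
Variables (f b g : R -> R[i]) (alpha : nat -> R -> R[i]).
Variables (Kf Kb Ka lam G Gb : R).
Hypothesis sigma_ge0 : 0 <= sigma.
Hypothesis N_ge2 : (2 <= N)%N.
Hypothesis x_incr : forall i, (1 <= i < N)%N -> x i < x i.+1.

Local Notation J := (Jint x N).
Local Notation c := (cmin x N).
Local Notation L := (x N - x 1%N).
Local Notation P := (Pinv x N).

Hypothesis fractal_eq : forall k, Tidx N k -> forall t, x k <= t <= x k.+1 ->
  g t = f t + alpha k (P k t) * (g (P k t) - b (P k t)).
Hypothesis f_holder : forall t1 t2, J t1 -> J t2 ->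
  cmod (f t1 - f t2) <= Kf * `|t1 - t2| `^ sigma.
Hypothesis b_holder : forall t1 t2, J t1 -> J t2 ->
  cmod (b t1 - b t2) <= Kb * `|t1 - t2| `^ sigma.
Hypothesis alpha_holder : forall k, Tidx N k -> forall t1 t2, J t1 -> J t2 ->
  cmod (alpha k t1 - alpha k t2) <= Ka * `|t1 - t2| `^ sigma.
Hypothesis alpha_le : forall k, Tidx N k -> forall t, J t -> cmod (alpha k t) <= lam.
Hypothesis g_le : forall t, J t -> cmod (g t) <= G.
Hypothesis b_le : forall t, J t -> cmod (b t) <= Gb.
Hypotheses (Kf_ge0 : 0 <= Kf) (Kb_ge0 : 0 <= Kb) (Ka_ge0 : 0 <= Ka).
Hypothesis contraction : lam / c `^ sigma < 1.

Let rho := lam / c `^ sigma.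
Let A := Kf + (lam * Kb + Ka * (G + Gb)) / c `^ sigma.
Let C := 2 * G / (c * L) `^ sigma.

Let x1_in_J : J (x 1%N).
Proof. by rewrite /Jint /= lexx ltW ?endpoints_lt. Qed.

Let xN_in_J : J (x N).
Proof. by rewrite /Jint /= lexx ltW ?endpoints_lt. Qed.

Let c_gt0 : 0 < c. Proof. exact: cmin_gt0. Qed.

Let lam_ge0 : 0 <= lam.
Proof. exact: le_trans (cmod_ge0 _) (alpha_le (k := 1%N) N_ge2 x1_in_J). Qed.

Let rho_ge0 : 0 <= rho. Proof. by rewrite divr_ge0 // powR_ge0. Qed.

Let G_ge0 : 0 <= G. Proof. exact: le_trans (cmod_ge0 _) (g_le x1_in_J). Qed.
Let Gb_ge0 : 0 <= Gb. Proof. exact: le_trans (cmod_ge0 _) (b_le x1_in_J). Qed.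

Let A_ge0 : 0 <= A.
Proof. by rewrite addr_ge0 // divr_ge0 ?powR_ge0 // addr_ge0 ?mulr_ge0 ?addr_ge0. Qed.

Let C_ge0 : 0 <= C. Proof. by rewrite divr_ge0 ?mulr_ge0 ?powR_ge0. Qed.

Lemma fractal_step k t1 t2 s : Tidx N k ->
  x k <= t1 <= x k.+1 -> x k <= t2 <= x k.+1 -> 0 <= s ->
  cmod (g (P k t1) - g (P k t2)) <= s * `|P k t1 - P k t2| `^ sigma ->
  cmod (g t1 - g t2) <= (A + rho * s) * `|t1 - t2| `^ sigma.
Proof.
move=> kT t1k t2k s_ge0 gP.
have [Ju1 Ju2] := (Pinv_cell N_ge2 x_incr kT t1k, Pinv_cell N_ge2 x_incr kT t2k).
have [Jt1 Jt2] := (cell_sub x_incr kT t1k, cell_sub x_incr kT t2k).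
rewrite (fractal_eq kT t1k) (fractal_eq kT t2k).
apply: le_trans (cmod_affine_diff _ _ _ _ _ _ _ _) _.
set p := `|t1 - t2| `^ sigma; set q := `|P k t1 - P k t2| `^ sigma.
have q_le : q <= p / c `^ sigma := Pinv_dist_powR N_ge2 x_incr _ _ sigma_ge0 kT.
have q_ge0 : 0 <= q := powR_ge0 _ _.
apply: le_trans (_ : _ <= Kf * p + lam * ((s + Kb) * q) + Ka * q * (G + Gb)) _.
  apply: lerD; first apply: lerD; first exact: f_holder.
  - apply: ler_pM; rewrite ?addr_ge0 ?cmod_ge0 ?alpha_le // mulrDl.
    by apply: lerD => //; exact: b_holder.
  - apply: ler_pM; rewrite ?addr_ge0 ?cmod_ge0 ?alpha_holder //.
    by apply: lerD; [exact: g_le | exact: b_le].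
have -> : Kf * p + lam * ((s + Kb) * q) + Ka * q * (G + Gb) =
    Kf * p + (lam * (s + Kb) + Ka * (G + Gb)) * q by ring.
have -> : (A + rho * s) * p =
    Kf * p + (lam * (s + Kb) + Ka * (G + Gb)) * (p / c `^ sigma) by rewrite /A /rho; ring.
by rewrite lerD2l; apply: ler_wpM2l; rewrite // addr_ge0 ?mulr_ge0 ?addr_ge0.
Qed.

Let powR_dist_le (s t u v : R) :
  `|s - t| <= `|u - v| -> `|s - t| `^ sigma <= `|u - v| `^ sigma.
Proof. by move=> le_dist; apply: ge0_ler_powR; rewrite ?nnegrE. Qed.

Lemma cmod_g_dist_le s t : J s -> J t -> 0 <= cmod (g s - g t) <= 2 * G.
Proof.
move=> Js Jt; rewrite cmod_ge0 /= mulr2n mulrDl mul1r.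
by apply: le_trans (cmodD _ _) _; rewrite cmodN lerD ?g_le.
Qed.

Lemma fractal_far s t : J s -> J t -> c * L <= `|s - t| ->
  cmod (g s - g t) <= C * `|s - t| `^ sigma.
Proof.
move=> Js Jt far; have cL_gt0 : 0 < c * L by rewrite mulr_gt0 ?subr_gt0 ?endpoints_lt.
apply: le_trans (_ : _ <= 2 * G) _; first by case/andP: (cmod_g_dist_le Js Jt).
rewrite /C mulrAC ler_pdivlMr ?powR_gt0 //; apply: ler_wpM2l; first by rewrite mulr_ge0.
by apply: ge0_ler_powR; rewrite ?nnegrE // ltW.
Qed.

Lemma holder_bootstrap (Q : R -> R -> Prop) B : 0 <= B ->
  (forall s t, Q s t -> J s /\ J t) ->
  (forall h s0, 0 < h -> 0 <= s0 ->
     (forall s t, Q s t -> h <= `|s - t| `^ sigma ->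
        cmod (g s - g t) <= s0 * `|s - t| `^ sigma) ->
     forall s t, Q s t -> h <= `|s - t| `^ sigma ->
        cmod (g s - g t) <= (B + rho * s0) * `|s - t| `^ sigma) ->
  forall s t, Q s t -> cmod (g s - g t) <= B / (1 - rho) * `|s - t| `^ sigma.
Proof.
move=> B_ge0 QJ step s t Qst; have [->|st] := eqVneq s t.
  by rewrite cmod_subrr mulr_ge0 ?powR_ge0 // divr_ge0 // subr_ge0 (ltW contraction).
have rho_bounds : 0 <= rho < 1 by rewrite rho_ge0.
apply: (@ratio_bootstrap R (R * R) (fun st => Q st.1 st.2)
  (fun st => cmod (g st.1 - g st.2)) (fun st => `|st.1 - st.2| `^ sigma)
  B rho (2 * G) rho_bounds _ _ (s, t)) => //=.
- by move=> [s' t'] /QJ[Js' Jt']; exact: cmod_g_dist_le.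
- move=> h s0 h_gt0 s0_ge0 IH [s' t'] /= Qst' hst'.
  by apply: (step h) => // s'' t'' Q'' h''; exact: (IH (s'', t'')).
- by rewrite powR_gt0 // normr_gt0 subr_eq0.
Qed.

Let K1 := (A + C) / (1 - rho).

Let K1_ge0 : 0 <= K1.
Proof. by apply: divr_ge0; [exact: addr_ge0 | rewrite subr_ge0 ltW]. Qed.

Let AK_ge0 : 0 <= A + rho * K1. Proof. by rewrite addr_ge0 // mulr_ge0. Qed.

Lemma fractal_endpoint s e : J s -> e = x 1%N \/ e = x N ->
  cmod (g s - g e) <= K1 * `|s - e| `^ sigma.
Proof.
move=> Js He; apply: (holder_bootstrap (Q := fun s e => J s /\ (e = x 1%N \/ e = x N))) => //.
- exact: addr_ge0.
- by move=> s' e' [Js' [->|->]].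
move=> h s0 h_gt0 s0_ge0 IH {s e Js He} s e [Js He] h_le.
have weaken B' : B' <= A + C + rho * s0 ->
    cmod (g s - g e) <= B' * `|s - e| `^ sigma ->
    cmod (g s - g e) <= (A + C + rho * s0) * `|s - e| `^ sigma.
  by move=> B'_le /le_trans; apply; apply: ler_wpM2r; rewrite ?powR_ge0.
have [far|[k kT [sk ek Pe]]] := endpoint_cases N_ge2 x_incr Js He.
  apply: (weaken C); first by rewrite addrAC lerDr addr_ge0 // mulr_ge0.
  by apply: fractal_far => //; case: He => ->.
apply: (weaken (A + rho * s0)); first by rewrite lerD2r lerDl.
apply: (fractal_step kT sk ek s0_ge0); rewrite Pe.
apply: IH; first by split; [exact: Pinv_cell|].
by apply: le_trans h_le _; rewrite -{2}Pe; apply/powR_dist_le/dist_le_Pinv.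
Qed.

Lemma fractal_node k s e : Tidx N k -> x k <= s <= x k.+1 -> e = x k \/ e = x k.+1 ->
  cmod (g s - g e) <= (A + rho * K1) * `|s - e| `^ sigma.
Proof.
move=> kT sk He.
have ek : x k <= e <= x k.+1 by case: He => ->; rewrite lexx ltW ?x_incr.
apply: (fractal_step kT sk ek K1_ge0); apply: fractal_endpoint; first exact: Pinv_cell.
by case: He => ->; [left; exact: Pinv_node_l | right; exact: Pinv_node_r].
Qed.

Lemma fractal_holder : holder sigma J g.
Proof.
pose B := A + C + 2 * (A + rho * K1).
exists (B / (1 - rho)) => s t Js Jt.
apply: (holder_bootstrap (Q := fun s t => J s /\ J t)) => //.
  by apply: addr_ge0; [exact: addr_ge0 | rewrite mulr_ge0 // addr_ge0 // mulr_ge0].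
move=> h s0 h_gt0 s0_ge0 IH {s t Js Jt} s t [Js Jt] h_le.
wlog st : s t Js Jt h_le / s <= t.
  move=> W; have [|/ltW ts] := leP s t; first exact: W.
  by rewrite cmod_distC distrC; apply: W; rewrite // distrC.
have w_ge0 : 0 <= `|s - t| `^ sigma := powR_ge0 _ _.
have B_split : (B + rho * s0) * `|s - t| `^ sigma =
    A * `|s - t| `^ sigma + C * `|s - t| `^ sigma
    + 2 * ((A + rho * K1) * `|s - t| `^ sigma) + rho * s0 * `|s - t| `^ sigma.
  by rewrite /B; ring.
have [Aw Cw Kw rw] : [/\ 0 <= A * `|s - t| `^ sigma, 0 <= C * `|s - t| `^ sigma,
    0 <= (A + rho * K1) * `|s - t| `^ sigma & 0 <= rho * s0 * `|s - t| `^ sigma].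
  by split; rewrite mulr_ge0 // mulr_ge0.
case: (pair_cases N_ge2 x_incr Js Jt st) => [far|[k kT [sk tk]]|[k [kT k1T] [sk tk]]].
- have far' : c * L <= `|s - t| by rewrite distrC ger0_norm ?subr_ge0.
  by have := fractal_far Js Jt far'; rewrite B_split; lra.
- apply: le_trans (fractal_step kT sk tk s0_ge0 _) _; last by rewrite B_split mulrDl; lra.
  apply: IH; first by split; exact: Pinv_cell.
  by apply: le_trans h_le _; apply/powR_dist_le/dist_le_Pinv.
- have /andP[_ s_le_z] := sk; have /andP[z_le_t _] := tk.
  have sz : cmod (g s - g (x k.+1)) <= (A + rho * K1) * `|s - t| `^ sigma.
    apply: le_trans (fractal_node kT sk (or_intror erefl)) _; apply: ler_wpM2l => //.
    apply: powR_dist_le; rewrite (distrC s) (distrC s t).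
    by rewrite !ger0_norm ?subr_ge0 // lerD2r.
  have zt : cmod (g (x k.+1) - g t) <= (A + rho * K1) * `|s - t| `^ sigma.
    rewrite cmod_distC; apply: le_trans (fractal_node k1T tk (or_introl erefl)) _.
    apply: ler_wpM2l => //; apply: powR_dist_le; rewrite (distrC s t).
    by rewrite !ger0_norm ?subr_ge0 ?(le_trans s_le_z) // lerD2l lerN2.
  by apply: le_trans (cmod_dist_triangle _ (g (x k.+1)) _) _; rewrite B_split; lra.
Qed.

End FractalHolder.

Theorem mainTheorem7 (R : realType) (sigma : R) (N : nat) (x : nat -> R)
    (f b : R -> R[i]) (alpha : nat -> R -> R[i]) (g : R -> R[i]) :
  0 < sigma <= 1 ->
  (2 <= N)%N ->
  (forall i, (1 <= i < N)%N -> x i < x i.+1) ->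
  holder sigma (Jint x N) f ->
  holder sigma (Jint x N) b ->
  (forall k, Tidx N k -> holder sigma (Jint x N) (alpha k)) ->
  b (x 1%N) = f (x 1%N) ->
  b (x N) = f (x N) ->
  (exists t, Jint x N t /\ b t <> f t) ->
  (forall k, Tidx N k -> sup [set cmod (alpha k t) | t in Jint x N] < 1) ->
  alpha_H sigma x N alpha / (cmin x N `^ sigma) < 1 ->
  is_alpha_fractal x N f b alpha g ->
  holder sigma (Jint x N) g.
Proof.
move=> /andP[/ltW sigma_ge0 _] N_ge2 x_incr f_hold b_hold alpha_hold _ _ _ _ small.
case=> g_cont g_eq.
have x1_le_xN := ltW (endpoints_lt N_ge2 x_incr).
have [G g_le] := cont_on_bounded x1_le_xN g_cont.
have [Gb b_le] := holder_bounded sigma_ge0 x1_le_xN b_hold.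
have [Kf Kf_ge0 f_holder] := holder_ge0 f_hold.
have [Kb Kb_ge0 b_holder] := holder_ge0 b_hold.
have [Ka Ka_ge0 alpha_holder] := holder_ge0_uniform (m := 1) (n := N) alpha_hold.
have [M _ alpha_le] := holder_bounded_uniform (m := 1) (n := N) sigma_ge0 x1_le_xN alpha_hold.
apply: (fractal_holder sigma_ge0 N_ge2 x_incr g_eq f_holder b_holder alpha_holder
  (cmod_le_alpha_sup alpha_le) g_le b_le Kf_ge0 Kb_ge0 Ka_ge0).
apply: le_lt_trans small; rewrite ler_pM2r ?invr_gt0 ?powR_gt0 ?cmin_gt0 //.
exact: alpha_sup_le_H.
Qed.
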